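(* The Bell polynomials $B_n(q)=\sum_{k=0}^nS(n,k)q^k$, $n\ge 0$, form a $q$-log-convex sequence.
   Context: $S(n,k)$ is the Stirling number of the second kind (number of partitions of $\{1,\dots,n\}$ into $k$ blocks), $S(0,0)=1$. For real polynomials $f,g$ write $f\le_q g$ if $g-f$ has nonnegative coefficients; a sequence $\{P_n(q)\}_{n\ge0}$ is $q$-log-convex if $P_n(q)^2\le_q P_{n-1}(q)P_{n+1}(q)$ for all $n\ge 1$. *)

From mathcomp Require Import all_boot all_order all_algebra.
Set Implicit Arguments. Unset Strict Implicit. Unset Printing Implicit Defensive.
Import GRing.Theory Num.Theory.
Local Open Scope ring_scope.

(* Stirling number of the second kind: number of partitions of {0,...,n-1}
   (= 'I_n) into exactly k blocks. Note S(0,0) = 1 (the empty partition). *)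
Definition stirling2 (n k : nat) : nat :=
  #|[set P : {set {set 'I_n}} | partition P [set: 'I_n] & #|P| == k]|.

Definition bell_poly (n : nat) : {poly int} :=
  \sum_(0 <= k < n.+1) (stirling2 n k)%:R *: 'X^k.

Definition qle (f g : {poly int}) : Prop := forall i : nat, 0 <= (g - f)`_i.

Definition q_log_convex (P : nat -> {poly int}) : Prop :=
  forall n : nat, (1 <= n)%N -> qle (P n ^+ 2) (P n.-1 * P n.+1).

From mathcomp Require Import all_boot all_order all_algebra.
From mathcomp Require Import ring.
Set Implicit Arguments. Unset Strict Implicit. Unset Printing Implicit Defensive.

(* Removing the element x from a set partition of D either deletes the block
   {x} or shrinks a larger block, so S(n+1,k+1) = (k+1) S(n,k+1) + S(n,k),
   which says B_{n+1} = T B_n for the operator T p = q (p + p').  For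
   f = sum_i s_i q^i one computes
     2 (f T^2 f - (T f)^2) = sum_(i,j) s_i s_j q^(i+j) (2 q + (i - j)^2),
   whose coefficients are nonnegative as soon as those of f are. *)

Section PartitionCount.
Variable T : finType.
Implicit Types (D : {set T}) (P Q : {set {set T}}) (B : {set T}).

Definition kpartitions D k := [set P | partition P D & #|P| == k].

Definition npartitions D k := #|kpartitions D k|.

Lemma npartitions_set0 k : npartitions set0 k = (k == 0).
Proof.
rewrite /npartitions; case: k => [|k].
  rewrite (_ : kpartitions _ _ = [set set0]) ?cards1 //.
  apply/setP => P; rewrite !inE partition_set0.
  by case: eqP => [->|]; rewrite ?cards0 // andbF.
rewrite (_ : kpartitions _ _ = set0) ?cards0 //.
apply/setP => P; rewrite !inE partition_set0.
by case: eqP => [->|]; rewrite ?cards0.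
Qed.

Lemma npartitions0 D : D != set0 -> npartitions D 0 = 0.
Proof.
move=> nD; rewrite /npartitions (_ : kpartitions _ _ = set0) ?cards0 //.
apply/setP => P; rewrite !inE; apply/negP => /andP[pP /eqP/cards0_eq P0].
by move: pP; rewrite P0 /partition /cover big_set0 eq_sym (negbTE nD).
Qed.

Variables (D : {set T}) (x : T).
Hypothesis xD : x \in D.

Lemma notin_cover_partitionD1 Q : partition Q (D :\ x) -> x \notin cover Q.
Proof. by move/cover_partition->; rewrite !inE eqxx. Qed.

Lemma set1_notin_partitionD1 Q : partition Q (D :\ x) -> [set x] \notin Q.
Proof.
move=> pQ; apply/negP => xQ; have := notin_cover_partitionD1 pQ.
by apply/negP/negPn/bigcupP; exists [set x]; rewrite ?set11.
Qed.

Lemma card_partitions_with_set1 k :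
  #|kpartitions D k.+1 :&: [set P : {set {set T}} | [set x] \in P]|
  = npartitions (D :\ x) k.
Proof.
rewrite /npartitions.
transitivity #|setU [set [set x]] @: kpartitions (D :\ x) k|; last first.
  apply: card_in_imset => Q1 Q2; rewrite !inE => /andP[p1 _] /andP[p2 _] e.
  by rewrite -(setU1K (set1_notin_partitionD1 p1)) e setU1K // set1_notin_partitionD1.
apply: eq_card => P; rewrite !inE; apply/idP/idP.
  move=> /andP[/andP[pP /eqP cP] xP]; apply/imsetP; exists (P :\ [set x]).
    rewrite inE partitionD1 //=; move: cP; rewrite (cardsD1 [set x]) xP.
    by rewrite add1n => -[->].
  by rewrite setD1K.
case/imsetP => Q; rewrite inE => /andP[pQ /eqP cQ] ->.
rewrite setU11 andbT cardsU1 set1_notin_partitionD1 // cQ eqxx andbT.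
rewrite -(setD1K xD); apply: partitionU1 => //.
  by apply/set0Pn; exists x; rewrite set11.
by rewrite disjoints1 !inE eqxx.
Qed.

(* [insert_in_block] and [detach_from_block] are inverse bijections between
   pairs (Q, B) with Q a partition of D :\ x and B \in Q, and partitions of D
   in which x is not a singleton block. *)
Definition insert_in_block (QB : {set {set T}} * {set T}) :=
  (x |: QB.2) |: (QB.1 :\ QB.2).

Definition detach_from_block P :=
  ((pblock P x :\ x) |: (P :\ pblock P x), pblock P x :\ x).

Lemma insert_in_blockP Q B : partition Q (D :\ x) -> B \in Q ->
  [/\ partition (insert_in_block (Q, B)) D,
      #|insert_in_block (Q, B)| = #|Q|,
      [set x] \notin insert_in_block (Q, B)
    & detach_from_block (insert_in_block (Q, B)) = (Q, B)].
Proof.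
move=> pQ BQ; rewrite /insert_in_block /=.
have sB := partitionS pQ BQ.
have xB : x \notin B by apply/negP => /(subsetP sB); rewrite !inE eqxx.
have nB := partition_neq0 pQ BQ.
have xBnQ : x |: B \notin Q :\ B.
  apply/negP => /setD1P[_ xBQ]; have := notin_cover_partitionD1 pQ.
  by move/negP; apply; apply/bigcupP; exists (x |: B); rewrite ?setU11.
have pP : partition ((x |: B) |: (Q :\ B)) D.
  have -> : D = (x |: B) :|: ((D :\ x) :\: B).
    apply/setP => y; rewrite !inE; have := subsetP sB y; rewrite !inE.
    case: (y =P x) => [->|_]; rewrite ?xD //=.
    by case: (y \in B) => //= /(_ isT) ->.
  apply: partitionU1; first exact: partitionD1.
    by apply/set0Pn; exists x; rewrite setU11.
  rewrite -setI_eq0; apply/eqP/setP => y; rewrite !inE.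
  by case: (y =P x) => //= _; case: (y \in B) => //=; rewrite andbF.
split => //.
- by rewrite cardsU1 xBnQ (cardsD1 B Q) BQ.
- rewrite !inE negb_or; apply/andP; split.
    apply/eqP => /setP eB; case/set0Pn: nB => y yB; have := eB y.
    by rewrite !inE yB orbT => /eqP ey; move: xB; rewrite -ey yB.
  by apply/negP => /andP[_ xQ]; move: (set1_notin_partitionD1 pQ); rewrite xQ.
- have xBblock : pblock ((x |: B) |: (Q :\ B)) x = x |: B.
    by apply: def_pblock; rewrite ?setU11 //; apply: partition_trivIset pP.
  by rewrite /detach_from_block /= xBblock setU1K // setU1K // setD1K.
Qed.

Lemma detach_from_blockP P : partition P D -> [set x] \notin P ->
  [/\ partition (detach_from_block P).1 (D :\ x),
      (detach_from_block P).2 \in (detach_from_block P).1,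
      #|(detach_from_block P).1| = #|P|
    & insert_in_block (detach_from_block P) = P].
Proof.
move=> pP nx; rewrite /detach_from_block /insert_in_block /=.
have xc : x \in cover P by rewrite (cover_partition pP).
set C := pblock P x.
have CP : C \in P by apply: pblock_mem.
have xC : x \in C by rewrite mem_pblock.
have sC := partitionS pP CP.
have nC : C :\ x != set0.
  apply/negP => /eqP e; have eC : C = [set x] by rewrite -(setD1K xC) e setU0.
  by move: nx; rewrite -eC CP.
have nCP : C :\ x \notin P :\ C.
  apply/negP => /setD1P[ne EP].
  have /trivIsetP tP := partition_trivIset pP; have := tP _ _ EP CP ne.
  rewrite -setI_eq0 (setIidPl (subsetDl _ _)); exact/negP.
split.
- have -> : D :\ x = (C :\ x) :|: (D :\: C).
    apply/setP => y; rewrite !inE; have := subsetP sC y.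
    case: (y =P x) => [->|_]; rewrite ?xC //=.
    by case: (y \in C) => //= /(_ isT) ->.
  apply: partitionU1 => //; first exact: partitionD1.
  rewrite -setI_eq0; apply/eqP/setP => y; rewrite !inE.
  by case: (y \in C); rewrite ?andbF.
- by rewrite setU11.
- by rewrite cardsU1 nCP (cardsD1 C P) CP.
- by rewrite setD1K // setU1K // setD1K.
Qed.

Lemma card_partitions_without_set1 k :
  #|kpartitions D k.+1 :\: [set P : {set {set T}} | [set x] \in P]|
  = (k.+1 * npartitions (D :\ x) k.+1)%N.
Proof.
pose parts := kpartitions (D :\ x) k.+1.
pose pairs := [set QB : {set {set T}} * {set T} | (QB.1 \in parts) && (QB.2 \in QB.1)].
transitivity #|insert_in_block @: pairs|.
  apply: eq_card => P; rewrite !inE; apply/idP/idP.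
    case/andP => nx /andP[pP /eqP cP]; have [p1 p2 p3 p4] := detach_from_blockP pP nx.
    apply/imsetP; exists (detach_from_block P); last by rewrite p4.
    by rewrite /pairs inE /= p2 andbT /parts inE p1 p3 cP eqxx.
  case/imsetP => [[Q B]]; rewrite /pairs /parts !inE /= => /andP[/andP[pQ /eqP cQ] BQ] ->.
  by have [p1 p2 p3 _] := insert_in_blockP pQ BQ; rewrite p3 p1 p2 cQ eqxx.
rewrite card_in_imset; last first.
  apply: (can_in_inj (g := detach_from_block)) => [[Q B]].
  rewrite /pairs /parts !inE /= => /andP[/andP[pQ _] BQ]; by have [] := insert_in_blockP pQ BQ.
rewrite -sum1_card (eq_bigl (fun QB => (QB.1 \in parts) && (QB.2 \in QB.1))); last first.
  by move=> QB; rewrite /pairs in_set.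
rewrite -(pair_big_dep _ _ (fun _ _ => 1%N)) mulnC -sum_nat_const.
apply: eq_bigr => Q Qparts; have : Q \in parts := Qparts.
by rewrite sum1_card inE => /andP[_ /eqP].
Qed.

Lemma npartitionsS k :
  npartitions D k.+1 = (k.+1 * npartitions (D :\ x) k.+1 + npartitions (D :\ x) k)%N.
Proof.
rewrite {1}/npartitions -(cardsID [set P : {set {set T}} | [set x] \in P]).
by rewrite card_partitions_with_set1 card_partitions_without_set1 addnC.
Qed.

End PartitionCount.

Lemma npartitions_card (T T' : finType) (D : {set T}) (D' : {set T'}) k :
  #|D| = #|D'| -> npartitions D k = npartitions D' k.
Proof.
move eqn : #|D| => n; elim: n D D' k eqn => [|n IH] D D' k cD cD'.
  by rewrite (cards0_eq cD) (cards0_eq (esym cD')) !npartitions_set0.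
have [x xD] : exists x, x \in D by apply/set0Pn; rewrite -card_gt0 cD.
have [x' xD'] : exists x', x' \in D' by apply/set0Pn; rewrite -card_gt0 -cD'.
have [nD nD'] : D != set0 /\ D' != set0 by split; apply/set0Pn; [exists x | exists x'].
case: k => [|k]; first by rewrite !npartitions0.
have cDx : #|D :\ x| = n by move: cD; rewrite (cardsD1 x) xD add1n => -[].
have cDx' : #|D' :\ x'| = n by move: cD'; rewrite (cardsD1 x') xD' add1n => -[].
by rewrite (npartitionsS xD) (npartitionsS xD') !(IH _ (D' :\ x')).
Qed.

Lemma stirling2E n k : stirling2 n k = npartitions [set: 'I_n] k.
Proof. by []. Qed.

Lemma stirling2_0 k : stirling2 0 k = (k == 0).
Proof.
rewrite stirling2E (_ : [set: 'I_0] = set0) ?npartitions_set0 //.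
by apply/eqP; rewrite -cards_eq0 cardsT card_ord.
Qed.

Lemma stirling2S0 n : stirling2 n.+1 0 = 0.
Proof. by rewrite stirling2E npartitions0 //; apply/set0Pn; exists ord0. Qed.

Lemma stirling2SS n k :
  stirling2 n.+1 k.+1 = (k.+1 * stirling2 n k.+1 + stirling2 n k)%N.
Proof.
have cD : #|[set: 'I_n.+1] :\ ord0| = #|[set: 'I_n]|.
  by move: (cardsD1 (@ord0 n) setT); rewrite !cardsT !card_ord in_setT add1n => -[].
by rewrite !stirling2E (npartitionsS (x := ord0)) // !(npartitions_card _ cD).
Qed.

Lemma stirling2_eq0 n k : (n < k)%N -> stirling2 n k = 0.
Proof.
elim: n k => [|n IH] [|k] // ltnk; first by rewrite stirling2_0.
by rewrite stirling2SS !IH ?muln0 //; exact: ltnW.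
Qed.

Import GRing.Theory Num.Theory.
Local Open Scope ring_scope.

Section TouchardOperator.
Variable R : comNzRingType.
Implicit Types (p q f : {poly R}).

Definition touchard_op p := 'X * (p + p^`()).

Lemma touchard_opD p q : touchard_op (p + q) = touchard_op p + touchard_op q.
Proof. by rewrite /touchard_op derivD addrACA mulrDr. Qed.

Lemma touchard_opZ (c : R) p : touchard_op (c *: p) = c *: touchard_op p.
Proof. by rewrite /touchard_op derivZ -scalerDr scalerAr. Qed.

Lemma touchard_op_sum (I : Type) (r : seq I) (P : pred I) (F : I -> {poly R}) :
  touchard_op (\sum_(i <- r | P i) F i) = \sum_(i <- r | P i) touchard_op (F i).
Proof. by rewrite /touchard_op raddf_sum -big_split mulr_sumr. Qed.

Lemma touchard_opXn i : touchard_op 'X^i = 'X^i * ('X + i%:R).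
Proof.
rewrite /touchard_op derivXn; case: i => [|i] /=.
  by rewrite mulr0n expr0 !addr0 mulr1 mul1r.
rewrite exprS; ring.
Qed.

Lemma touchard_op2Xn i :
  touchard_op (touchard_op 'X^i) = 'X^i * ('X ^+ 2 + 'X * (2 * i + 1)%:R + (i * i)%:R).
Proof.
rewrite touchard_opXn mulrDr -exprSr mulr_natr -scaler_nat touchard_opD touchard_opZ.
rewrite !touchard_opXn scaler_nat exprSr !natrD !natrM; ring.
Qed.

Lemma mulr_sum_scale (I : Type) (r : seq I) (a b : I -> R) (p q : I -> {poly R}) :
  (\sum_(i <- r) a i *: p i) * (\sum_(j <- r) b j *: q j) =
  \sum_(i <- r) \sum_(j <- r) (a i * b j) *: (p i * q j).
Proof.
rewrite mulr_suml; apply: eq_bigr => i _; rewrite mulr_sumr; apply: eq_bigr => j _.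
by rewrite -scalerAl -scalerAr scalerA.
Qed.

Lemma touchard_op_sqr_defect f :
  (f * touchard_op (touchard_op f) - touchard_op f ^+ 2) *+ 2 =
  \sum_(i < size f) \sum_(j < size f)
    (f`_i * f`_j) *: ('X^(i + j) * ('X *+ 2 + ((i%:R - j%:R) ^+ 2)%:P)).
Proof.
pose t i : {poly R} := 'X^i * ('X + i%:R).
pose w i : {poly R} := 'X^i * ('X ^+ 2 + 'X * (2 * i + 1)%:R + (i * i)%:R).
rewrite -[in LHS](coefK f) poly_def.
set F := \sum_(i < size f) f`_i *: 'X^i.
have TF : touchard_op F = \sum_(i < size f) f`_i *: t i.
  by rewrite touchard_op_sum; apply: eq_bigr => i _; rewrite touchard_opZ touchard_opXn.
have TTF : touchard_op (touchard_op F) = \sum_(i < size f) f`_i *: w i.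
  rewrite TF touchard_op_sum; apply: eq_bigr => i _.
  by rewrite touchard_opZ /t -touchard_opXn touchard_op2Xn.
have FTTF : F * touchard_op (touchard_op F) =
    \sum_(i < size f) \sum_(j < size f) (f`_i * f`_j) *: ('X^i * w j).
  by rewrite TTF mulr_sum_scale.
(* Write F T^2 F once as is and once transposed, so that twice the defect
   becomes a single symmetric double sum. *)
have FTTF' : F * touchard_op (touchard_op F) =
    \sum_(i < size f) \sum_(j < size f) (f`_i * f`_j) *: ('X^j * w i).
  rewrite FTTF exchange_big; apply: eq_bigr => i _; apply: eq_bigr => j _.
  by rewrite mulrC.
have TF2 : touchard_op F ^+ 2 =
    \sum_(i < size f) \sum_(j < size f) (f`_i * f`_j) *: (t i * t j).
  by rewrite expr2 TF mulr_sum_scale.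
rewrite mulrnBl !mulr2n {1}FTTF FTTF' TF2 -!big_split -sumrB; apply: eq_bigr => i _.
rewrite -!big_split -sumrB; apply: eq_bigr => j _.
rewrite /= -!scalerDr -scalerBr; congr (_ *: _).
rewrite /t /w exprD rmorphXn rmorphB !rmorph_nat !natrD !natrM; ring.
Qed.

End TouchardOperator.

Section NonnegativeCoefficients.
Variable R : numDomainType.
Implicit Types (p q f : {poly R}).

Definition nneg_coef p := forall k, 0 <= p`_k.

Lemma nneg_coefD p q : nneg_coef p -> nneg_coef q -> nneg_coef (p + q).
Proof. by move=> p0 q0 k; rewrite coefD addr_ge0. Qed.

Lemma nneg_coefM p q : nneg_coef p -> nneg_coef q -> nneg_coef (p * q).
Proof. by move=> p0 q0 k; rewrite coefM; apply: sumr_ge0 => j _; apply: mulr_ge0. Qed.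

Lemma nneg_coefZ (c : R) p : 0 <= c -> nneg_coef p -> nneg_coef (c *: p).
Proof. by move=> c0 p0 k; rewrite coefZ mulr_ge0. Qed.

Lemma nneg_coefMn p n : nneg_coef p -> nneg_coef (p *+ n).
Proof. by move=> p0 k; rewrite coefMn mulrn_wge0. Qed.

Lemma nneg_coefC (c : R) : 0 <= c -> nneg_coef c%:P.
Proof. by move=> c0 k; rewrite coefC; case: eqP. Qed.

Lemma nneg_coefXn n : nneg_coef ('X^n : {poly R}).
Proof. by move=> k; rewrite coefXn ler0n. Qed.

Lemma nneg_coef_sum (I : Type) (r : seq I) (P : pred I) (F : I -> {poly R}) :
  (forall i, P i -> nneg_coef (F i)) -> nneg_coef (\sum_(i <- r | P i) F i).
Proof. by move=> F0 k; rewrite coef_sum; apply: sumr_ge0 => i /F0. Qed.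

Lemma nneg_coef_touchard_op_sqr_defect f :
  nneg_coef f -> nneg_coef (f * touchard_op (touchard_op f) - touchard_op f ^+ 2).
Proof.
move=> f0 k; rewrite -(pmulrn_lge0 _ (isT : 0 < 2)%N) -coefMn touchard_op_sqr_defect.
apply: nneg_coef_sum => i _; apply: nneg_coef_sum => j _.
apply: nneg_coefZ; first exact: mulr_ge0.
apply: nneg_coefM; first exact: nneg_coefXn.
apply: nneg_coefD; first exact: nneg_coefMn (nneg_coefXn 1).
by apply: nneg_coefC; apply: real_exprn_even_ge0; rewrite // realB ?realn.
Qed.

End NonnegativeCoefficients.

Lemma coef_bell_poly n i : (bell_poly n)`_i = (stirling2 n i)%:R.
Proof.
rewrite /bell_poly big_mkord -(poly_def _ (fun k => (stirling2 n k)%:R)) coef_poly.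
by case: ltnP => // ltni; rewrite stirling2_eq0.
Qed.

Lemma bell_polyS n : bell_poly n.+1 = touchard_op (bell_poly n).
Proof.
apply/polyP => -[|i]; rewrite coef_bell_poly /touchard_op coefXM /=.
  by rewrite stirling2S0.
by rewrite coefD coef_deriv !coef_bell_poly stirling2SS natrD addrC natrM mulr_natl.
Qed.

Lemma nneg_coef_bell_poly n : nneg_coef (bell_poly n).
Proof. by move=> i; rewrite coef_bell_poly ler0n. Qed.

Theorem proposition4p4 : q_log_convex bell_poly.
Proof.
move=> [|n] // _ i /=; rewrite !bell_polyS.
exact: nneg_coef_touchard_op_sqr_defect (nneg_coef_bell_poly n) i.
Qed.
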